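(* Let $\Gamma=(G,w,\ell)$ be a tropical curve and $P\in\mathcal C_G$. Then $[T_P]$ is a theta-characteristic of $\Gamma$, and the map $$\beta\colon \mathcal C_G\longrightarrow T^{\mathrm{trop}}_\Gamma,\qquad P\longmapsto [T_P]$$ is a bijection.
   Context: A tropical curve is a triple $\Gamma=(G,w,\ell)$ where $G=(V,E)$ is a finite connected graph (loops and multiple edges allowed), $w\colon V\to\mathbb Z_{\ge 0}$ is a weight function with $2w(v)-2+\deg_G(v)>0$ for all $v$ (degrees count loops twice), and $\ell\colon E\to\mathbb R_{>0}$. Its genus is $g=\sum_v w(v)+|E|-|V|+1$. $\Gamma$ is regarded as a metric space by identifying each edge $e$ with a segment (a circle if $e$ is a loop) of length $\ell(e)$, glued at vertices; $p_e$ denotes the mid-point of $e$. Divisors, rational functions, $\operatorname{div}(f)$ (sum of outgoing slopes at each point) and $\operatorname{Pic}(\Gamma)=\operatorname{Div}(\Gamma)/\{\operatorname{div}(f)\}$ are as usual in tropical geometry; $[D]$ is the class of $D$. The canonical divisor is $K_\Gamma=\sum_{v\in V}(2w(v)-2+\deg_G(v))v$. A theta-characteristic of $\Gamma$ is a class $[D]\in\operatorname{Pic}(\Gamma)$ with $[2D]=[K_\Gamma]$; their set is $T^{\mathrm{trop}}_\Gamma$. $\mathcal C_G$ is the set of subsets $P\subseteq E$ such that every vertex has even degree in the subgraph spanned by $P$ (loops counting twice). For $P\in\mathcal C_G$, $$T_P:=\sum_{v\in V}\Big(\frac{\deg_P(v)}{2}-1+w(v)\Big)v+\sum_{e\in E\setminus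 P}p_e.$$ *)

From HB Require Import structures.
From mathcomp Require Import all_boot all_order all_algebra.
From mathcomp Require Import reals.
Set Implicit Arguments. Unset Strict Implicit. Unset Printing Implicit Defensive.
Import Order.TTheory GRing.Theory Num.Theory.
Local Open Scope ring_scope.

Section TropicalCurve.
Variable R : realType.
(* A finite graph G = (V,E) with loops/multi-edges: every edge e has an
   (arbitrarily chosen) orientation from [src e] to [tgt e]; a loop has
   src e = tgt e. *)
Variables (V E : finType) (src tgt : E -> V).
Variable w : V -> nat.
Variable l : E -> R.

(* degree of v in the subgraph spanned by P (loops count twice) *)
Definition degP (P : {set E}) (v : V) : nat :=
  #|[set e in P | src e == v]| + #|[set e in P | tgt e == v]|.
Definition degG (v : V) : nat := degP setT v.

Definition adjacent : rel V :=
  fun u v => [exists e, ((src e == u) && (tgt e == v)) || ((src e == v) && (tgt e == u))].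
Definition graph_connected : Prop := forall u v : V, connect adjacent u v.

Definition stable : Prop :=
  forall v : V, (0 < 2%:Z * (w v)%:Z - 2 + (degG v)%:Z)%R.

Definition even_subgraph (P : {set E}) : Prop := forall v : V, ~~ odd (degP P v).

(* Points of the metric space Gamma: a vertex [inl v], or an interior point
   [inr (e, t)] of edge e at distance t from src e, with 0 < t < l e. *)
Definition pt := (V + (E * R))%type.
Definition valid_pt (x : pt) : bool :=
  match x with inl _ => true | inr (e, t) => (0 < t) && (t < l e) end.

(* Divisors: finite formal sums sum n_i x_i, given as a list of pairs. *)
Definition divisor := seq (pt * int).
Definition is_divisor (D : divisor) : Prop := all (fun p => valid_pt p.1) D.
Definition coef (D : divisor) (x : pt) : int := \sum_(p <- D | p.1 == x) p.2.
Definition dscale (k : int) (D : divisor) : divisor := [seq (p.1, k * p.2) | p <- D].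

(* Rational functions: continuous piecewise linear functions with integer
   slopes and finitely many pieces.  Such f is given by its values at the
   vertices and, on each edge e (parametrised by t in [0, l e] from src e),
   by breakpoints 0 < b_1 < ... < b_k < l e and integer slopes s_0,...,s_k,
   s_i being the slope on [b_i, b_(i+1)] (b_0 = 0, b_(k+1) = l e). *)
Record ratfun := RatFun {
  rf_val : V -> R;
  rf_bp : E -> seq R;
  rf_sl : E -> seq int }.

Definition knots (f : ratfun) (e : E) : seq R := 0 :: rcons (rf_bp f e) (l e).

Definition rf_valid (f : ratfun) : Prop :=
  forall e : E,
    [/\ sorted <%R (knots f e),
        size (rf_sl f e) = (size (rf_bp f e)).+1 &
        rf_val f (src e)
          + \sum_(i < size (rf_sl f e))
              ((rf_sl f e)`_i)%:~R * ((knots f e)`_i.+1 - (knots f e)`_i)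
        = rf_val f (tgt e)].

(* div(f)(x) = sum of the outgoing slopes of f at x *)
Definition rf_div (f : ratfun) (x : pt) : int :=
  match x with
  | inl v => \sum_(e | src e == v) head 0 (rf_sl f e)
             - \sum_(e | tgt e == v) last 0 (rf_sl f e)
  | inr (e, t) =>
      if t \in rf_bp f e then
        let i := index t (rf_bp f e) in (rf_sl f e)`_i.+1 - (rf_sl f e)`_i
      else 0
  end.

Definition lin_equiv (D1 D2 : divisor) : Prop :=
  exists f : ratfun, rf_valid f /\
    forall x : pt, valid_pt x -> coef D1 x - coef D2 x = rf_div f x.

Definition canonical_div : divisor :=
  [seq (inl v, 2%:Z * (w v)%:Z - 2 + (degG v)%:Z) | v <- enum V].

Definition theta_char (D : divisor) : Prop := lin_equiv (dscale 2 D) canonical_div.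

(* T_P (for P in C_G, deg_P(v) is even so deg_P(v)/2 is exact) *)
Definition T_P (P : {set E}) : divisor :=
  [seq (inl v, ((degP P v)./2)%:Z - 1 + (w v)%:Z) | v <- enum V]
  ++ [seq (inr (e, l e / 2), 1%:Z) | e <- enum E & e \notin P].

End TropicalCurve.

From HB Require Import structures.
From mathcomp Require Import all_boot all_order all_algebra.
From mathcomp Require Import reals.
From mathcomp Require Import ring lra zify.
Import Order.TTheory GRing.Theory Num.Theory.
Local Open Scope ring_scope.
Set Implicit Arguments. Unset Strict Implicit. Unset Printing Implicit Defensive.

(* Then, for the curve:
   - [T_P] is a theta-characteristic: the function [valleys P], zero at the
     vertices and with slopes -1, 1 on the edges outside P, has divisor
     2T_P - K.
   - Injectivity: if div f = T_P - T_Q, f has a single kink c_e on each edge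
     e, at its midpoint, so it increases by (2s_e + c_e) l(e)/2 along e; the
     integers 2s_e + c_e form a circulation, which vanishes by a maximum
     principle on the connected graph, whence c = 0 and P = Q.
   - Surjectivity: if div f = 2D - K, the kinks of f are even, so its slopes
     along an edge have a common parity; the edges of even slope form an even
     subgraph P, and halving f (after a midpoint kink on the odd edges) gives
     g = (f - valleys P)/2 with div g = D - T_P. *)

Section SlopeLists.
Variable R : realType.
Implicit Types (a m t L : R) (bp : seq R) (s c z : int) (sl : seq int).

Fixpoint increase a bp sl L {struct bp} : R :=
  match bp, sl with
  | [::], s :: _ => s%:~R * (L - a)
  | b :: bp', s :: sl' => s%:~R * (b - a) + increase b bp' sl' L
  | _, [::] => 0
  end.

Lemma sorted_knots a bp L : sorted <%R (a :: rcons bp L) ->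
  sorted <%R bp /\ forall t, t \in bp -> a < t < L.
Proof.
move=> /= Hp; split; first by move: Hp; rewrite rcons_path => /andP[/path_sorted].
have below_L : forall a', path <%R a' (rcons bp L) -> forall t, t \in bp -> t < L.
  elim: (bp) => [|b bp' IH] a' //= /andP[_ Hp'] t.
  rewrite in_cons => /orP[/eqP ->|]; last exact: IH Hp' t.
  by have /allP/(_ L) := order_path_min lt_trans Hp'; rewrite mem_rcons mem_head => /(_ isT).
move=> t tin; rewrite (below_L a Hp t tin) andbT.
by have /allP/(_ t) := order_path_min lt_trans Hp; rewrite mem_rcons in_cons tin orbT => /(_ isT).
Qed.

Lemma increase_knots a bp sl L : size sl = (size bp).+1 ->
  \sum_(i < size sl) (sl`_i)%:~R * ((a :: rcons bp L)`_i.+1 - (a :: rcons bp L)`_i)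
  = increase a bp sl L.
Proof.
elim: bp a sl => [|b bp IH] a [|s sl] //=.
  by case: sl => //= _; rewrite big_ord_recl big_ord0 addr0.
by move=> [Hs]; rewrite big_ord_recl /= -(IH b sl Hs).
Qed.

(* The jump of slope at [t]; this is the divisor of a rational function at an
   interior point of an edge. *)
Definition kink t bp sl : int :=
  if t \in bp then sl`_(index t bp).+1 - sl`_(index t bp) else 0.

Lemma kink_cons t b bp s sl :
  kink t (b :: bp) (s :: sl) = if b == t then sl`_0 - s else kink t bp sl.
Proof.
rewrite /kink /= in_cons.
by case: (eqVneq t b) => [->|//]; rewrite /= ?eqxx.
Qed.

Lemma kinks_behead (Pk : R -> int -> Prop) b bp s sl : b \notin bp ->
  (forall t, t \in b :: bp -> Pk t (kink t (b :: bp) (s :: sl))) ->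
  forall t, t \in bp -> Pk t (kink t bp sl).
Proof.
move=> bnin H t tbp; have := H t; rewrite in_cons tbp orbT kink_cons.
by case: eqP => [bt|_ /(_ isT)//]; move: bnin; rewrite bt tbp.
Qed.

Lemma increase_flat a bp sl L : uniq bp -> size sl = (size bp).+1 ->
  (forall t, t \in bp -> kink t bp sl = 0) ->
  increase a bp sl L = (head 0 sl)%:~R * (L - a) /\ last 0 sl = head 0 sl.
Proof.
elim: bp a sl => [|b bp IH] a [|s sl] //=; first by case: sl.
move=> /andP[bnin ubp] [Hs] H0.
case: sl Hs H0 => [|s' sl] //= Hs H0.
have := H0 b (mem_head _ _); rewrite kink_cons eqxx /= => /eqP.
rewrite subr_eq0 => /eqP ess; subst s'.
have [-> Hlast] := IH b (s :: sl) ubp Hs (kinks_behead (Pk := fun _ k => k = 0) bnin H0).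
by split; [rewrite /= -mulrDr addrC subrKA | exact: Hlast].
Qed.

Lemma increase_kink_at a bp sl L m c : uniq bp -> size sl = (size bp).+1 ->
  m \in bp -> (forall t, t \in bp -> kink t bp sl = if t == m then c else 0) ->
  increase a bp sl L = (head 0 sl)%:~R * (m - a) + (head 0 sl + c)%:~R * (L - m)
  /\ last 0 sl = head 0 sl + c.
Proof.
elim: bp a sl => [|b bp IH] a [|s sl] //=.
move=> /andP[bnin ubp] [Hs] mbp H0.
case: sl Hs H0 => [|s' sl] //= Hs H0.
have Hb := H0 b (mem_head _ _); rewrite kink_cons eqxx /= in Hb.
have H0' := kinks_behead (Pk := fun t k => k = if t == m then c else 0) bnin H0.
case: (eqVneq b m) => [bm|bm].
  subst b; rewrite eqxx in Hb.
  have Hflat : forall t, t \in bp -> kink t bp (s' :: sl) = 0.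
    move=> t tbp; rewrite H0' //.
    by case: eqP => // tm; move: bnin; rewrite -tm tbp.
  have [-> Hlast] := increase_flat (sl := s' :: sl) m L ubp Hs Hflat.
  have es : s' = s + c by rewrite -Hb addrC subrK.
  by split; [rewrite /= es | move: Hlast => /= ->; rewrite es].
rewrite (negbTE bm) in Hb; move/eqP: Hb; rewrite subr_eq0 => /eqP es; subst s'.
move: mbp; rewrite in_cons eq_sym (negbTE bm) /= => mbp.
have [-> Hlast] := IH b (s :: sl) ubp Hs mbp H0'.
by split; [rewrite /=; ring | exact: Hlast].
Qed.

(* The general one-kink computation: the hypothesis at [t = m] forces [c = 0]
   when [m] is not a breakpoint. *)
Lemma increase_one_kink a bp sl L m c : uniq bp -> size sl = (size bp).+1 ->
  (forall t, t \in m :: bp -> kink t bp sl = if t == m then c else 0) ->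
  increase a bp sl L = (head 0 sl)%:~R * (m - a) + (head 0 sl + c)%:~R * (L - m)
  /\ last 0 sl = head 0 sl + c.
Proof.
move=> ubp Hs H.
have Hbp : forall t, t \in bp -> kink t bp sl = if t == m then c else 0.
  by move=> t tbp; apply: H; rewrite in_cons tbp orbT.
have [mbp|mbp] := boolP (m \in bp); first exact: increase_kink_at.
have c0 : c = 0 by have := H m (mem_head _ _); rewrite /kink (negbTE mbp) eqxx.
have Hflat : forall t, t \in bp -> kink t bp sl = 0.
  by move=> t tbp; rewrite Hbp //; case: eqP => // tm; move: mbp; rewrite -tm tbp.
have [-> ->] := increase_flat a L ubp Hs Hflat.
by rewrite c0 addr0; split=> //; ring.
Qed.

Lemma slopes_parity bp sl : uniq bp -> size sl = (size bp).+1 ->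
  (forall t, t \in bp -> (2 %| kink t bp sl)%Z) ->
  forall z, z \in sl -> (z %% 2)%Z = (head 0 sl %% 2)%Z.
Proof.
elim: bp sl => [|b bp IH] [|s sl] //=.
  by case: sl => //= _ _ _ z; rewrite inE => /eqP ->.
move=> /andP[bnin ubp] [Hs] H2.
case: sl Hs H2 => [|s' sl] //= Hs H2.
have := H2 b (mem_head _ _); rewrite kink_cons eqxx /= -eqz_mod_dvd => /eqP Hb.
have H2' := kinks_behead (Pk := fun _ k => (2 %| k)%Z) bnin H2.
move=> z; rewrite in_cons => /orP[/eqP -> //|zin].
by rewrite (IH (s' :: sl) ubp Hs H2' z zin) /= Hb.
Qed.

Definition halfz z : int := (z %/ 2)%Z.

Lemma halfz_spec z r : (z %% 2)%Z = r -> z = halfz z * 2 + r.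
Proof. by move=> <-; exact: divz_eq. Qed.

Lemma halfz_specR z r : (z %% 2)%Z = r -> (z%:~R : R) = 2 * (halfz z)%:~R + r%:~R.
Proof. by move=> /halfz_spec {1}->; rewrite intrD intrM mulrC. Qed.

Lemma increase_half a bp sl L r : size sl = (size bp).+1 ->
  (forall z, z \in sl -> (z %% 2)%Z = r) ->
  2 * increase a bp (map halfz sl) L = increase a bp sl L - r%:~R * (L - a).
Proof.
elim: bp a sl => [|b bp IH] a [|s sl] //=.
  by case: sl => //= _ Hr; rewrite (halfz_specR (Hr s _)) ?inE //; ring.
move=> [Hs] Hr; rewrite mulrDr IH //; last by move=> z zin; rewrite Hr // in_cons zin orbT.
by rewrite (halfz_specR (Hr s (mem_head _ _))); ring.
Qed.

Lemma kink_half t bp sl r : size sl = (size bp).+1 ->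
  (forall z, z \in sl -> (z %% 2)%Z = r) ->
  2 * kink t bp (map halfz sl) = kink t bp sl.
Proof.
elim: bp sl => [|b bp IH] [|s sl] //=.
move=> [Hs] Hr; rewrite !kink_cons; case: eqP => _.
  case: sl Hs Hr => [|s' sl] //= Hs Hr.
  rewrite [in RHS](halfz_spec (Hr s _)) ?mem_head //.
  rewrite [in RHS](halfz_spec (Hr s' _)) ?inE ?eqxx ?orbT //; ring.
by apply: IH => // z zin; rewrite Hr // in_cons zin orbT.
Qed.

(* For odd slopes [sl]: the slopes [(s+1)/2] before [m] and [(s-1)/2] after it,
   the point [m] being inserted among the breakpoints if necessary.  This is
   half the sum of the function and of the tent rising with slope 1 up to [m]
   and falling with slope -1 after it. *)
Fixpoint insert_mid m bp sl {struct bp} : seq R * seq int :=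
  match bp, sl with
  | b :: bp', s :: sl' =>
      if b < m then let r := insert_mid m bp' sl' in (b :: r.1, (halfz s + 1) :: r.2)
      else if b == m then (bp, (halfz s + 1) :: map halfz sl')
      else (m :: bp, (halfz s + 1) :: map halfz sl)
  | [::], s :: _ => ([:: m], [:: halfz s + 1; halfz s])
  | _, [::] => (bp, [::])
  end.

Lemma insert_mid_size m bp sl : size sl = (size bp).+1 ->
  size (insert_mid m bp sl).2 = (size (insert_mid m bp sl).1).+1.
Proof.
elim: bp sl => [|b bp IH] [|s sl] //= [Hs].
by case: ifP => _ /=; [rewrite IH | case: ifP => _ /=; rewrite size_map // Hs].
Qed.

Lemma insert_mid_head m bp sl : size sl = (size bp).+1 ->
  head 0 (insert_mid m bp sl).2 = halfz (head 0 sl) + 1.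
Proof. by case: sl => [|s sl] //= _; case: bp => [|b bp] //=; case: ifP => //; case: ifP. Qed.

Lemma insert_mid_last m bp sl : size sl = (size bp).+1 ->
  last 0 (insert_mid m bp sl).2 = halfz (last 0 sl).
Proof.
elim: bp sl => [|b bp IH] [|s sl] //=; first by case: sl.
move=> [Hs]; case: ifP => _ /=.
  have Hs' := insert_mid_size m Hs.
  have -> : last s sl = last 0 sl by case: sl Hs {Hs'}.
  by rewrite -(IH sl Hs); case: (insert_mid m bp sl) Hs' => b1 [|x s1].
by case: ifP => _ /=; [case: sl Hs => [|x sl] //= _ |]; rewrite last_map.
Qed.

Lemma insert_mid_sorted m a bp sl L : a < m -> m < L -> sorted <%R (a :: rcons bp L) ->
  sorted <%R (a :: rcons (insert_mid m bp sl).1 L).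
Proof.
elim: bp a sl => [|b bp IH] a [|s sl] //= am mL; first by rewrite am mL.
move=> /andP[ab Hp].
case: ifP => bm /=; first by rewrite ab; exact: IH.
case: ifP => [/eqP bmE|bm'] /=; first by rewrite ab.
have mb : m < b by rewrite lt_neqAle eq_sym bm' /= leNgt bm.
by rewrite am mb.
Qed.

Lemma insert_mid_increase m a bp sl L : size sl = (size bp).+1 ->
  (forall z, z \in sl -> (z %% 2)%Z = 1) ->
  2 * increase a (insert_mid m bp sl).1 (insert_mid m bp sl).2 L
  = increase a bp sl L + (m - a) - (L - m).
Proof.
elim: bp a sl => [|b bp IH] a [|s sl] //=.
  by case: sl => //= _ Hr; rewrite (halfz_specR (Hr s _)) ?inE // intrD; ring.
move=> [Hs] Hr.
have Hs1 := halfz_specR (Hr s (mem_head _ _)).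
have Hr' : forall z, z \in sl -> (z %% 2)%Z = 1.
  by move=> z zin; apply: Hr; rewrite in_cons zin orbT.
case: ifP => _ /=; first by rewrite mulrDr IH // Hs1 intrD; ring.
case: ifP => [/eqP bm|_] /=.
  by subst b; rewrite mulrDr (increase_half m L Hs Hr') Hs1 intrD; ring.
have Hs2 : size (s :: sl) = (size (b :: bp)).+1 by rewrite /= Hs.
rewrite mulrDr (increase_half m L Hs2 Hr) /= Hs1 intrD; ring.
Qed.

Lemma insert_mid_kink m bp sl t : size sl = (size bp).+1 -> sorted <%R bp ->
  (forall z, z \in sl -> (z %% 2)%Z = 1) ->
  2 * kink t (insert_mid m bp sl).1 (insert_mid m bp sl).2
  = kink t bp sl - (if t == m then 2 else 0).
Proof.
elim: bp sl => [|b bp IH] [|s sl] //=.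
  case: sl => //= _ _ Hr; rewrite /kink !inE.
  by case: (eqVneq t m) => [->|ne] /=; [rewrite eqxx /=; ring | rewrite mulr0 subr0].
move=> [Hs] Hsort Hr.
have Hr' : forall z, z \in sl -> (z %% 2)%Z = 1.
  by move=> z zin; apply: Hr; rewrite in_cons zin orbT.
have E1 := halfz_spec (Hr s (mem_head _ _)).
have Hs2 : size (s :: sl) = (size (b :: bp)).+1 by rewrite /= Hs.
case: ifP => bm /=.
  rewrite !kink_cons; case: eqP => [bt|_]; last exact: IH (path_sorted Hsort) Hr'.
  subst t; rewrite (lt_eqF bm).
  case: sl Hs Hr' {Hr Hs2} => [|s' sl] //= Hs Hr'.
  have Hx := insert_mid_head (sl := s' :: sl) m Hs.
  have -> : (insert_mid m bp (s' :: sl)).2`_0 = halfz s' + 1.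
    by case: (insert_mid m bp (s' :: sl)) Hx => b1 [|x s1].
  by rewrite [in RHS]E1 [in RHS](halfz_spec (Hr' s' (mem_head _ _))); ring.
case: ifP => [/eqP bmE|bm'] /=.
  subst b; rewrite !kink_cons; case: eqP => [<-|tm].
    rewrite eqxx; case: sl Hs Hr' {Hr Hs2} => [|s' sl] //= Hs Hr'.
    by rewrite [in RHS]E1 [in RHS](halfz_spec (Hr' s' (mem_head _ _))); ring.
  by rewrite (introF eqP (nesym tm)) subr0; exact: kink_half Hs Hr'.
have mb : m < b by rewrite lt_neqAle eq_sym bm' /= leNgt bm.
rewrite kink_cons [in RHS]kink_cons; case: eqP => [<-|tm].
  have -> : kink m bp sl = 0.
    rewrite /kink; case: ifP => // mbp.
    have := allP (order_path_min lt_trans Hsort) m mbp => bm2.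
    by move: (lt_trans mb bm2); rewrite ltxx.
  by rewrite eqxx bm' /=; ring.
by rewrite (introF eqP (nesym tm)) subr0 -(kink_cons t b bp s sl); exact: kink_half Hs2 Hr.
Qed.

Definition halve_edge (odd : bool) m bp sl : seq R * seq int :=
  if odd then insert_mid m bp sl else (bp, map halfz sl).

Section HalveEdge.
Variables (odd : bool) (m : R) (bp : seq R) (sl : seq int).
Hypothesis size_sl : size sl = (size bp).+1.
Hypothesis parity_sl : forall z, z \in sl -> (z %% 2)%Z = odd%:Z.
Let bp' := (halve_edge odd m bp sl).1.
Let sl' := (halve_edge odd m bp sl).2.

Lemma halve_edge_size : size sl' = (size bp').+1.
Proof. by rewrite /sl' /bp' /halve_edge; case: odd; [exact: insert_mid_size | rewrite size_map]. Qed.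

Lemma halve_edge_head : head 0 sl' = halfz (head 0 sl) + odd%:Z.
Proof.
rewrite /sl' /halve_edge; case: odd; first exact: insert_mid_head.
by case: (sl) => [|s sl0] /=; rewrite addr0.
Qed.

Lemma halve_edge_last : last 0 sl' = halfz (last 0 sl).
Proof.
rewrite /sl' /halve_edge; case: odd; first exact: insert_mid_last.
by case: (sl) => [|s sl0] //=; rewrite last_map.
Qed.

Lemma halve_edge_sorted a L : a < m -> m < L -> sorted <%R (a :: rcons bp L) ->
  sorted <%R (a :: rcons bp' L).
Proof. by rewrite /bp' /halve_edge; case: odd => //; exact: insert_mid_sorted. Qed.

Lemma halve_edge_increase a L :
  2 * increase a bp' sl' L = increase a bp sl L + (if odd then (m - a) - (L - m) else 0).
Proof.
rewrite /bp' /sl' /halve_edge; case: odd parity_sl => Hr.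
  by rewrite (insert_mid_increase m a L size_sl Hr) [RHS]addrA.
by rewrite (increase_half a L size_sl Hr) mul0r subr0 addr0.
Qed.

Lemma halve_edge_kink t : sorted <%R bp ->
  2 * kink t bp' sl' = kink t bp sl - (if odd && (t == m) then 2 else 0).
Proof.
rewrite /bp' /sl' /halve_edge; case: odd parity_sl => Hr Hsort /=.
  exact: insert_mid_kink.
by rewrite (kink_half t size_sl Hr) subr0.
Qed.

End HalveEdge.

End SlopeLists.

(* A potential [x] on the vertices whose differences along the edges are the
   integer flow [sg] times positive lengths [L] is constant when [sg] is
   conserved at every vertex: a vertex where [x] is maximal has no outgoing
   flow and no incoming flow, and by connectedness every vertex is maximal. *)
Section MaximumPrinciple.
Variable R : realType.
Variables (V E : finType) (src tgt : E -> V).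
Variables (x : V -> R) (sg : E -> int) (L : E -> R).
Hypothesis L_gt0 : forall e, 0 < L e.
Hypothesis potential : forall e, x (tgt e) - x (src e) = (sg e)%:~R * L e.
Hypothesis conservation :
  forall v, \sum_(e | src e == v) sg e = \sum_(e | tgt e == v) sg e.

Lemma flow_at_maximum v : (forall u, x u <= x v) ->
  forall e, (src e == v) || (tgt e == v) -> sg e = 0.
Proof.
move=> vmax.
have out_le0 : forall e, src e == v -> sg e <= 0.
  move=> e /eqP se; have := potential e; rewrite se => Hxe.
  have : (sg e)%:~R * L e <= 0 by rewrite -Hxe subr_le0.
  by rewrite pmulr_lle0 // lerz0.
have in_ge0 : forall e, tgt e == v -> 0 <= sg e.
  move=> e /eqP te; have := potential e; rewrite te => Hxe.
  have : 0 <= (sg e)%:~R * L e by rewrite -Hxe subr_ge0.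
  by rewrite pmulr_lge0 // ler0z.
have out0 : \sum_(e | src e == v) sg e = 0.
  apply/eqP; rewrite eq_le sumr_le0 //= conservation; exact: sumr_ge0.
have in0 : \sum_(e | tgt e == v) sg e = 0 by rewrite -conservation.
move=> e /orP[se|te]; last exact: (psumr_eq0P in_ge0 in0 te).
apply/eqP; rewrite -oppr_eq0; apply/eqP.
have out0' : \sum_(e | src e == v) - sg e = 0 by rewrite sumrN out0 oppr0.
by apply: (psumr_eq0P _ out0' se) => i /out_le0; rewrite oppr_ge0.
Qed.

Lemma maximum_principle : (0 < #|V|)%N -> graph_connected src tgt ->
  forall e, sg e = 0.
Proof.
move=> /card_gt0P [v0 _] conn.
have [vm _ vm_max] := @arg_maxP _ _ V v0 xpredT x isT.
pose top := [pred v | x v == x vm].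
have top_max : forall u, u \in top -> forall y, x y <= x u.
  by move=> u /eqP -> y; exact: vm_max.
have step : forall u v, adjacent src tgt u v -> u \in top -> v \in top.
  move=> u v /existsP[e He] utop; have /eqP xu := utop.
  have ue : (src e == u) || (tgt e == u).
    by case/orP: He => /andP[/eqP -> /eqP ->]; rewrite eqxx ?orbT.
  have := potential e; rewrite (flow_at_maximum (top_max u utop) ue) mul0r.
  move=> /eqP; rewrite subr_eq0 => /eqP xst; rewrite inE.
  case/orP: He => /andP[/eqP se /eqP te]; first by rewrite -te xst se xu.
  by rewrite -se -xst te xu.
have top_closed : closed (adjacent src tgt) top.
  move=> u v Huv; apply/idP/idP; first exact: step.
  apply: step; case/existsP: Huv => e He; apply/existsP; exists e; by rewrite orbC.
move=> e; apply: (flow_at_maximum (top_max (src e) _)); last by rewrite eqxx.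
by rewrite -(closed_connect top_closed (conn vm (src e))) inE.
Qed.

End MaximumPrinciple.

Lemma sum_enum_at (T : finType) (M : nmodType) (x : T) (P : pred T) (F : T -> M) :
  (forall y, P y -> y = x) -> \sum_(y <- enum T | P y) F y = if P x then F x else 0.
Proof.
move=> Px_only; rewrite big_enum_cond /=; case: ifP => Px.
  rewrite (bigD1 x) /= ?Px // big1 ?addr0 // => y /andP[Py yx].
  by move: yx; rewrite (Px_only y Py) eqxx.
by rewrite big1 // => y Py; move: Px; rewrite -(Px_only y Py) Py.
Qed.

Section TropicalCurve.
Variable R : realType.
Variables (V E : finType) (src tgt : E -> V) (w : V -> nat) (l : E -> R).

Local Notation K := (canonical_div R src tgt w).
Local Notation TP := (T_P src tgt w l).
Local Notation even := (even_subgraph src tgt).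

Definition outside (P : {set E}) (e : E) : int := (e \notin P)%:Z.

Definition ends_outside (P : {set E}) (v : V) : int :=
  \sum_(e | src e == v) outside P e + \sum_(e | tgt e == v) outside P e.

Lemma coef_dscale k (D : divisor R V E) x : coef (dscale k D) x = k * coef D x.
Proof. by rewrite /coef /dscale big_map mulr_sumr; apply: eq_bigr. Qed.

Lemma coef_K_vertex v : coef K (inl v) = 2%:Z * (w v)%:Z - 2 + (degG src tgt v)%:Z.
Proof.
rewrite /coef /canonical_div big_map /=.
by rewrite (@sum_enum_at V _ v (fun u => inl u == inl v :> pt R V E)) ?eqxx // => u /eqP [].
Qed.

Lemma coef_K_edge z : coef K (inr z) = 0.
Proof. by rewrite /coef /canonical_div big_map big1. Qed.

Lemma coef_TP_vertex P v : coef (TP P) (inl v) = ((degP src tgt P v)./2)%:Z - 1 + (w v)%:Z.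
Proof.
rewrite /coef /T_P big_cat /= [X in _ + X]big_map [X in _ + X]big1 // addr0 big_map.
by rewrite (@sum_enum_at V _ v (fun u => inl u == inl v :> pt R V E)) ?eqxx // => u /eqP [].
Qed.

Lemma coef_TP_edge P e t :
  coef (TP P) (inr (e, t)) = if t == l e / 2 then outside P e else 0.
Proof.
rewrite /coef /T_P big_cat /= [X in X + _]big_map [X in X + _]big1 // add0r.
rewrite big_map big_filter_cond /= (@sum_enum_at E _ e
  (fun e' => (e' \notin P) && (inr (e', l e' / 2) == inr (e, t) :> pt R V E))).
  have -> : (inr (e, l e / 2) == inr (e, t) :> pt R V E) = (t == l e / 2).
    by apply/eqP/eqP => [[->]|->].
  by rewrite /outside; case: (e \notin P); case: (t == _).
by move=> e' /andP[_ /eqP [->]].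
Qed.

Lemma card_at (P : {set E}) (f : E -> V) v :
  #|[set e in P | f e == v]|%:Z = \sum_(e | f e == v) (e \in P)%:Z.
Proof.
rewrite -[LHS]natz -sumr_const big_mkcond [RHS]big_mkcond /=.
by apply: eq_bigr => e _; rewrite inE; case: (e \in P); case: (f e == v).
Qed.

Lemma degP_ends P v : (degP src tgt P v)%:Z + ends_outside P v = (degG src tgt v)%:Z.
Proof.
rewrite /degG /degP /ends_outside !PoszD !card_at addrACA -!big_split /=.
by congr (_ + _); apply: eq_bigr => e _; rewrite /outside in_setT; case: (e \in P).
Qed.

Lemma twice_TP_minus_K P v : even P ->
  2 * coef (TP P) (inl v) - coef K (inl v) = - ends_outside P v.
Proof.
move=> HP; rewrite coef_TP_vertex coef_K_vertex.
have := degP_ends P v; have := odd_double_half (degP src tgt P v).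
rewrite (negbTE (HP v)); lia.
Qed.

Lemma twice_TP_difference P Q v : even P -> even Q ->
  2 * (coef (TP P) (inl v) - coef (TP Q) (inl v)) = ends_outside Q v - ends_outside P v.
Proof.
move=> HP HQ; have := twice_TP_minus_K v HP; have := twice_TP_minus_K v HQ; lia.
Qed.

Lemma rf_div_vertex (f : ratfun R V E) v : rf_div src tgt f (inl v)
  = \sum_(e | src e == v) head 0 (rf_sl f e) - \sum_(e | tgt e == v) last 0 (rf_sl f e).
Proof. by []. Qed.

Lemma rf_div_edge (f : ratfun R V E) e t :
  rf_div src tgt f (inr (e, t)) = kink t (rf_bp f e) (rf_sl f e).
Proof. by []. Qed.

Lemma rf_validP (f : ratfun R V E) e : rf_valid src tgt l f ->
  [/\ sorted <%R (rf_bp f e), uniq (rf_bp f e),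
      forall t, t \in rf_bp f e -> 0 < t < l e,
      size (rf_sl f e) = (size (rf_bp f e)).+1
    & rf_val f (tgt e) - rf_val f (src e) = increase 0 (rf_bp f e) (rf_sl f e) (l e)].
Proof.
move=> /(_ e) [Hknots Hsize Hcont]; have [Hsorted Hin] := sorted_knots Hknots.
split=> //; first exact: lt_sorted_uniq.
by rewrite -increase_knots // -Hcont addrC addKr.
Qed.

Hypothesis l_gt0 : forall e, 0 < l e.

Lemma midpoint_inside e : 0 < l e / 2 < l e.
Proof. by have le0 := l_gt0 e; apply/andP; split; lra. Qed.

Definition valleys (P : {set E}) : ratfun R V E :=
  RatFun (fun _ => 0) (fun e => if e \in P then [::] else [:: l e / 2])
    (fun e => if e \in P then [:: 0] else [:: -1; 1]).

Lemma valleys_valid P : rf_valid src tgt l (valleys P).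
Proof.
move=> e; have /andP[m0 mL] := midpoint_inside e.
rewrite /knots /=; case: ifP => _.
  by split=> //=; rewrite ?l_gt0 // big_ord_recl big_ord0 /= mul0r !add0r.
split=> //=; first by rewrite m0 mL.
by rewrite !big_ord_recl big_ord0 /= /bump /=; lra.
Qed.

Lemma valleys_div P : even P -> forall x, valid_pt l x ->
  coef (dscale 2 (TP P)) x - coef K x = rf_div src tgt (valleys P) x.
Proof.
move=> HP [v|[e t]] _; rewrite coef_dscale.
  rewrite twice_TP_minus_K // rf_div_vertex /ends_outside opprD -!sumrN.
  by congr (_ + _); apply: eq_bigr => e _; rewrite /outside /=; case: (e \in P).
rewrite coef_TP_edge coef_K_edge rf_div_edge /outside /=.
case: (e \in P) => /=; first by case: (t == _).
by rewrite kink_cons (eq_sym (l e / 2)); case: (t == _).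
Qed.

Lemma theta_char_TP P : even P -> theta_char src tgt w l (TP P).
Proof. by move=> HP; exists (valleys P); split; [exact: valleys_valid | exact: valleys_div]. Qed.

Section Injectivity.
Variables (P Q : {set E}) (f : ratfun R V E).
Hypotheses (HP : even P) (HQ : even Q) (Hf : rf_valid src tgt l f).
Hypothesis Hdiv : forall x, valid_pt l x ->
  coef (TP P) x - coef (TP Q) x = rf_div src tgt f x.

(* The kink of f at the midpoint of e, and the resulting slope-sum of f on e. *)
Let c (e : E) : int := outside P e - outside Q e.
Let sg (e : E) : int := 2 * head 0 (rf_sl f e) + c e.

(* On each edge f has slope s, then s + c e after the midpoint, so it
   increases by (2s + c e) l(e)/2 along e. *)
Lemma difference_on_edge e : last 0 (rf_sl f e) = head 0 (rf_sl f e) + c e /\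
  rf_val f (tgt e) - rf_val f (src e) = (sg e)%:~R * (l e / 2).
Proof.
have [_ Hu Hin Hsize ->] := rf_validP e Hf.
have /andP[m0 mL] := midpoint_inside e.
have Hkink : forall t, t \in l e / 2 :: rf_bp f e ->
    kink t (rf_bp f e) (rf_sl f e) = if t == l e / 2 then c e else 0.
  move=> t; rewrite in_cons => /orP[/eqP ->|/Hin Ht].
    by rewrite -rf_div_edge -Hdiv /= ?m0 ?mL // !coef_TP_edge eqxx.
  by rewrite -rf_div_edge -Hdiv //= !coef_TP_edge; case: (t == _); rewrite ?subr0.
have [-> ->] := increase_one_kink 0 (l e) Hu Hsize Hkink.
by split=> //; rewrite /sg !intrD intrM (_ : (2 : int)%:~R = 2 :> R) //; field.
Qed.

(* The integers [sg] form a circulation: their net outflow at [v] is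
   2 div(f)(v) + ends_outside P v - ends_outside Q v, which vanishes. *)
Lemma difference_conservation v :
  \sum_(e | src e == v) sg e = \sum_(e | tgt e == v) sg e.
Proof.
apply/eqP; rewrite -subr_eq0; apply/eqP.
have -> : \sum_(e | src e == v) sg e - \sum_(e | tgt e == v) sg e
    = 2 * rf_div src tgt f (inl v) + (ends_outside P v - ends_outside Q v).
  have Hlast e : last 0 (rf_sl f e) = head 0 (rf_sl f e) + c e.
    by case: (difference_on_edge e).
  rewrite rf_div_vertex (eq_bigr _ (fun e _ => Hlast e)) /sg /c /ends_outside.
  by rewrite !big_split /= !sumrN -!mulr_sumr; ring.
by rewrite -Hdiv // twice_TP_difference //; ring.
Qed.

(* By the maximum principle [sg] vanishes, so [c] is even, hence zero. *)
Lemma TP_injective : (0 < #|V|)%N -> graph_connected src tgt -> P = Q.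
Proof.
move=> HV conn.
have half_gt0 e : 0 < l e / 2 by case/andP: (midpoint_inside e).
have sg0 := maximum_principle half_gt0 (fun e => proj2 (difference_on_edge e))
  difference_conservation HV conn.
apply/setP => e; have := sg0 e; rewrite /sg /c /outside.
by case: (e \in P); case: (e \in Q) => //=; lia.
Qed.

End Injectivity.

Section Surjectivity.
Variables (D : divisor R V E) (f : ratfun R V E).
Hypothesis Hf : rf_valid src tgt l f.
Hypothesis Hdiv : forall x, valid_pt l x ->
  coef (dscale 2 D) x - coef K x = rf_div src tgt f x.

(* The kinks of f are even, since K vanishes inside the edges. *)
Lemma kinks_even e t : t \in rf_bp f e -> (2 %| kink t (rf_bp f e) (rf_sl f e))%Z.
Proof.
have [_ _ Hin _ _] := rf_validP e Hf.
move=> /Hin Ht; rewrite -rf_div_edge -Hdiv // coef_dscale coef_K_edge subr0.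
by apply/dvdzP; exists (coef D (inr (e, t))); rewrite mulrC.
Qed.

(* Hence the slopes of f along an edge have a common parity; the edges with
   even slopes form the candidate subgraph. *)
Definition even_edges : {set E} := [set e | (head 0 (rf_sl f e) %% 2)%Z == 0].

Lemma slope_parity e z : z \in rf_sl f e -> (z %% 2)%Z = outside even_edges e.
Proof.
have [_ Hu _ Hsize _] := rf_validP e Hf.
move=> zin; rewrite (slopes_parity Hu Hsize (@kinks_even e) zin) /outside inE.
by case: eqP => [-> //|ne] /=; lia.
Qed.

Lemma head_last_parity e : (head 0 (rf_sl f e) %% 2)%Z = outside even_edges e
  /\ (last 0 (rf_sl f e) %% 2)%Z = outside even_edges e.
Proof.
have [_ _ _ Hsize _] := rf_validP e Hf.
case: (rf_sl f e) Hsize (@slope_parity e) => [|s sl] //= _ Hpar.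
by split; apply: Hpar; [exact: mem_head | exact: mem_last].
Qed.

(* g = (f - valleys even_edges) / 2, obtained by halving f edge by edge. *)
Definition halved : ratfun R V E :=
  RatFun (fun v => rf_val f v / 2)
    (fun e => (halve_edge (e \notin even_edges) (l e / 2) (rf_bp f e) (rf_sl f e)).1)
    (fun e => (halve_edge (e \notin even_edges) (l e / 2) (rf_bp f e) (rf_sl f e)).2).

(* [halved] is continuous: along each edge its increase is half that of f, as
   the tent added on odd edges rises and falls by the same amount l(e)/2. *)
Lemma halved_valid : rf_valid src tgt l halved.
Proof.
move=> e; have [Hknots Hsize _] := Hf e; have [_ _ _ _ Hinc] := rf_validP e Hf.
have /andP[m0 mL] := midpoint_inside e.
have Hpar := @slope_parity e.
rewrite /knots /=; split.
- exact: (halve_edge_sorted _ _ m0 mL Hknots).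
- exact: halve_edge_size.
- rewrite increase_knots; last exact: halve_edge_size.
  have := halve_edge_increase (l e / 2) Hsize Hpar 0 (l e).
  by case: ifP => _; lra.
Qed.

(* At a vertex, 2 div(g) = div(f) + ends_outside: the end slopes of g are
   half those of f, corrected by the parity of the edge. *)
Lemma twice_halved_div_vertex v :
  2 * rf_div src tgt halved (inl v) = rf_div src tgt f (inl v) + ends_outside even_edges v.
Proof.
have head_eq e : 2 * head 0 (rf_sl halved e) = head 0 (rf_sl f e) + outside even_edges e.
  have [_ _ _ Hsize _] := rf_validP e Hf; have [Hhead _] := head_last_parity e.
  by rewrite /= halve_edge_head // [in RHS](halfz_spec Hhead); ring.
have last_eq e : 2 * last 0 (rf_sl halved e) = last 0 (rf_sl f e) - outside even_edges e.
  have [_ _ _ Hsize _] := rf_validP e Hf; have [_ Hlast] := head_last_parity e.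
  by rewrite /= halve_edge_last // [in RHS](halfz_spec Hlast); ring.
rewrite !rf_div_vertex mulrBr !mulr_sumr /ends_outside.
rewrite (eq_bigr _ (fun e _ => head_eq e)) (eq_bigr _ (fun e _ => last_eq e)).
by rewrite big_split sumrB /=; ring.
Qed.

(* Evenness of [even_edges]: deg_P(v) = deg(v) - ends_outside P v, and the
   vertex identity above shows the right-hand side is even. *)
Lemma even_edges_even : even even_edges.
Proof.
move=> v; have := twice_halved_div_vertex v; have := degP_ends even_edges v.
by rewrite -Hdiv // coef_dscale coef_K_vertex; lia.
Qed.

(* div(g) = D - T_P, from 2 div(g) = div(f) - (2T_P - K) = 2D - 2T_P. *)
Lemma halved_div x : valid_pt l x ->
  coef D x - coef (TP even_edges) x = rf_div src tgt halved x.
Proof.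
case: x => [v|[e t]] Hx.
  have := twice_halved_div_vertex v; have := twice_TP_minus_K v even_edges_even.
  by rewrite -Hdiv // coef_dscale; lia.
have [Hsorted _ _ Hsize _] := rf_validP e Hf.
have := halve_edge_kink (l e / 2) Hsize (@slope_parity e) t Hsorted.
have := Hdiv Hx; rewrite coef_dscale coef_K_edge subr0 !rf_div_edge coef_TP_edge /=.
by rewrite /outside; case: (e \notin even_edges); case: (t == _) => /=; lia.
Qed.

End Surjectivity.

Lemma theta_char_TP_class D : theta_char src tgt w l D ->
  exists2 P, even P & lin_equiv src tgt l D (TP P).
Proof.
case=> f [Hf Hdiv]; exists (even_edges f); first exact: even_edges_even Hf Hdiv.
by exists (halved f); split; [exact: halved_valid Hf Hdiv | exact: halved_div Hf Hdiv].
Qed.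

End TropicalCurve.

Theorem proposition3p2 (R : realType) (V E : finType) (src tgt : E -> V)
  (w : V -> nat) (l : E -> R)
  (HV : (0 < #|V|)%N)
  (Hconn : graph_connected src tgt)
  (Hstab : stable src tgt w)
  (Hl : forall e : E, 0 < l e) :
  (* [T_P] is a theta-characteristic for every P in C_G *)
  (forall P : {set E}, even_subgraph src tgt P ->
     theta_char src tgt w l (T_P src tgt w l P))
  (* beta is injective *)
  /\ (forall P Q : {set E}, even_subgraph src tgt P -> even_subgraph src tgt Q ->
        lin_equiv src tgt l (T_P src tgt w l P) (T_P src tgt w l Q) -> P = Q)
  (* beta is surjective onto T^trop *)
  /\ (forall D : divisor R V E, is_divisor l D -> theta_char src tgt w l D ->
        exists2 P : {set E}, even_subgraph src tgt P &
          lin_equiv src tgt l D (T_P src tgt w l P)).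
Proof.
split; [|split].
- by move=> P HP; exact: (theta_char_TP w Hl HP).
- by move=> P Q HP HQ [f [Hf Hdiv]]; exact: (TP_injective Hl HP HQ Hf Hdiv HV Hconn).
- by move=> D _; exact: (theta_char_TP_class Hl).
Qed.
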